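(* Let $\rho=(V,B_1,B_2,B_3,I,J)$ be a framed representation, and let $\alpha=(V,B_1,B_2,I,J)$ be its underlying ADHM representation. Then $\rho$ is cyclic if and only if $\alpha$ is cyclic (stable). Here: - $\rho$ is cyclic if there is no proper nonzero subspace $V'\subset V$ preserved by $B_1,B_2,B_3$ and containing $\mathrm{Im}\,I$; - $\alpha$ is cyclic if there is no proper nonzero subspace $V'\subset V$ preserved by $B_1,B_2$ and containing $\mathrm{Im}\,I$.
   Context: A framed representation consists of: - a finite-dimensional complex vector space $V$; - the fixed space $V_\infty=\mathbb{C}^r$ with basis $e_1,\dots,e_r$, and the fixed map $A_r\in\mathrm{End}(V_\infty)$ with $A_re_a=e_{a+1}$, $e_{r+1}=0$; - linear maps $B_1,B_2,B_3\in\mathrm{End}(V)$, $I:V_\infty\to V$, $J:V\to V_\infty$. These satisfy $$[B_1,B_2]+IJ=0,\quad JB_3-A_rJ=0,\quad B_3I-IA_r=0,\quad [B_3,B_1]=0,\quad [B_3,B_2]=0.$$ *)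

From HB Require Import structures.
From mathcomp Require Import all_boot all_order all_algebra.
From mathcomp Require Import complex.
From mathcomp Require Import reals.
Set Implicit Arguments. Unset Strict Implicit. Unset Printing Implicit Defensive.
Import Order.TTheory GRing.Theory Num.Theory.
Local Open Scope ring_scope.

(* The fixed framing space V_infty = C^r, realised as row vectors 'rV[F]_r,
   with standard basis e_a = delta_mx 0 a. *)

(* shift matrix acting on row vectors by right multiplication:
   e_i *m shift_mx = e_(i+1), and e_(r-1) *m shift_mx = 0. *)
Definition shift_mx (F : fieldType) (r : nat) : 'M[F]_r :=
  \matrix_(i < r, j < r) ((nat_of_ord j == (nat_of_ord i).+1)%:R).

Definition A_r (F : fieldType) (r : nat) : 'End('rV[F]_r) :=
  linfun (fun v : 'rV[F]_r => v *m shift_mx F r).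

Definition framed_rep (F : fieldType) (V : vectType F) (r : nat)
    (B1 B2 B3 : 'End(V)) (I : 'Hom('rV[F]_r, V)) (J : 'Hom(V, 'rV[F]_r)) : Prop :=
  [/\ ((B1 \o B2)%VF - (B2 \o B1)%VF + (I \o J)%VF) = 0,
      ((J \o B3)%VF - (A_r F r \o J)%VF) = 0,
      ((B3 \o I)%VF - (I \o A_r F r)%VF) = 0,
      ((B3 \o B1)%VF - (B1 \o B3)%VF) = 0
    & ((B3 \o B2)%VF - (B2 \o B3)%VF) = 0].

Definition preserves (F : fieldType) (V : vectType F) (f : 'End(V)) (U : {vspace V}) : Prop :=
  (f @: U <= U)%VS.

Definition framed_cyclic (F : fieldType) (V : vectType F) (r : nat)
    (B1 B2 B3 : 'End(V)) (I : 'Hom('rV[F]_r, V)) : Prop :=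
  ~ exists U : {vspace V},
      [/\ U != 0%VS, U != fullv,
          [/\ preserves B1 U, preserves B2 U & preserves B3 U]
        & (limg I <= U)%VS].

Definition adhm_cyclic (F : fieldType) (V : vectType F) (r : nat)
    (B1 B2 : 'End(V)) (I : 'Hom('rV[F]_r, V)) : Prop :=
  ~ exists U : {vspace V},
      [/\ U != 0%VS, U != fullv, preserves B1 U, preserves B2 U
        & (limg I <= U)%VS].

From HB Require Import structures.
From mathcomp Require Import all_boot all_order all_algebra.
From mathcomp Require Import complex.
From mathcomp Require Import reals.
Set Implicit Arguments. Unset Strict Implicit. Unset Printing Implicit Defensive.
Import Order.TTheory GRing.Theory Num.Theory.
Local Open Scope ring_scope.

(* Only the relations involving B3 matter.  A (B1, B2)-invariant subspace U
   containing Im I is shrunk to its B3-core, the largest B3-invariant subspace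
   of U: it is still (B1, B2)-invariant because B1 and B2 commute with B3, and
   it still contains Im I because B3 I = I A_r makes Im I B3-invariant.  The
   core is nonzero when Im I is; when Im I = 0 one uses an eigenspace of B3
   instead, unless B3 is a scalar, in which case U itself is B3-invariant. *)

Section InvariantSubspaces.
Variables (K : fieldType) (V : vectType K).
Implicit Types (f g : 'End(V)) (U L : {vspace V}).

Lemma preservesP f U : preserves f U <-> {in U, forall x, f x \in U}.
Proof.
split=> [fU x xU | fU]; first exact: (subvP fU) (memv_img f xU).
by apply/subvP => _ /memv_imgP [x xU ->]; apply: fU.
Qed.

Lemma comp_lfun_commE f g : (f \o g)%VF - (g \o f)%VF = 0 -> forall x, f (g x) = g (f x).
Proof. by move/eqP; rewrite subr_eq0 => /eqP fg x; rewrite -!comp_lfunE fg. Qed.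

Lemma preserves_limg_intertwined (W : vectType K) (A : 'End(W)) (I : 'Hom(W, V)) f :
  (f \o I)%VF - (I \o A)%VF = 0 -> preserves f (limg I).
Proof.
move/eqP; rewrite subr_eq0 => /eqP fI.
by rewrite /preserves -limg_comp fI limg_comp limgS ?subvf.
Qed.

Lemma vspace_chain_stabilizes (W : nat -> {vspace V}) :
  (forall n, (W n.+1 <= W n)%VS) -> exists n, W n.+1 = W n.
Proof.
move=> decrW; have [d] := ubnP (\dim (W 0%N)); elim: d 0%N => // d IHd n dimWn.
have [|neW] := eqVneq (W n.+1) (W n); first by exists n.
have ltW : (\dim (W n.+1) < \dim (W n))%N.
  by rewrite (ltn_leqif (dimv_leqif_eq (decrW n))) neW.
exact: IHd (leq_trans ltW dimWn).
Qed.

Section CoreChain.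
Variables (f : 'End(V)) (U : {vspace V}).

(* [core_chain n] consists of the x such that f^k x lies in U for all k <= n. *)
Fixpoint core_chain n : {vspace V} :=
  if n is n.+1 then (core_chain n :&: f @^-1: core_chain n)%VS else U.

Lemma core_chain_decr n : (core_chain n.+1 <= core_chain n)%VS.
Proof. exact: capvSl. Qed.

Lemma core_chain_sub n : (core_chain n <= U)%VS.
Proof. by elim: n => //= n; apply: subv_trans (capvSl _ _). Qed.

Lemma sub_core_chain L n :
  preserves f L -> (L <= U)%VS -> (L <= core_chain n)%VS.
Proof.
move=> /preservesP fL LU; elim: n => //= n IHn.
apply/subvP => x xL; rewrite memv_cap -memv_preim.
by rewrite !(subvP IHn) ?fL.
Qed.

Lemma preserves_core_chain g n :
  (f \o g)%VF - (g \o f)%VF = 0 -> preserves g U -> preserves g (core_chain n).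
Proof.
move=> fg gU; elim: n => //= n /preservesP gW.
apply/preservesP => x; rewrite !memv_cap -!memv_preim => /andP [xW fxW].
by rewrite gW // comp_lfun_commE // gW.
Qed.

Lemma core_chain_stable n :
  core_chain n.+1 = core_chain n -> preserves f (core_chain n).
Proof.
move=> eqW; apply/preservesP => x.
by rewrite -{1}eqW memv_cap memv_preim => /andP [].
Qed.

End CoreChain.

Lemma exists_invariant_core f U :
  exists2 W : {vspace V}, (W <= U)%VS &
    [/\ preserves f W,
        forall L, preserves f L -> (L <= U)%VS -> (L <= W)%VS
      & forall g, (f \o g)%VF - (g \o f)%VF = 0 -> preserves g U -> preserves g W].
Proof.
have [n eqW] := vspace_chain_stabilizes (core_chain_decr f U).
exists (core_chain f U n); first exact: core_chain_sub.
split=> [|L|g]; [exact: core_chain_stable | exact: sub_core_chain |].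
exact: preserves_core_chain.
Qed.

Lemma memv_leigenspace f a x : (x \in passmx.leigenspace f a) = (f x == a *: x).
Proof. by rewrite memv_ker !lfun_simp subr_eq0. Qed.

Lemma preserves_leigenspace f g a :
  (f \o g)%VF - (g \o f)%VF = 0 -> preserves g (passmx.leigenspace f a).
Proof.
move=> fg; apply/preservesP => x; rewrite !memv_leigenspace => /eqP fx.
by rewrite comp_lfun_commE // fx linearZ.
Qed.

Lemma full_leigenspace_preserves f a U :
  passmx.leigenspace f a = fullv -> preserves f U.
Proof.
move=> Ef; apply/preservesP => x xU.
have : x \in passmx.leigenspace f a by rewrite Ef memvf.
by rewrite memv_leigenspace => /eqP ->; rewrite memvZ.
Qed.

End InvariantSubspaces.

Lemma exists_leigenvalue (K : closedFieldType) (V : vectType K) (f : 'End(V)) :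
  (0 < \dim {:V})%N -> exists a, passmx.leigenvalue f a.
Proof.
move=> dimV_gt0; set M := passmx.mxof (vbasis fullv) (vbasis fullv) f.
have [a Ma] : exists a, root (char_poly M) a.
  by apply/closed_rootP; rewrite size_char_poly eqSS -lt0n.
exists a; rewrite /passmx.leigenvalue (passmx.leigenspaceE (vbasisP fullv)).
rewrite passmx.vsof_eq0 ?vbasisP //.
by have := eigenvalue_root_char M a; rewrite Ma.
Qed.

Theorem lemma3p2 (R : realType) (V : vectType R[i]) (r : nat)
    (B1 B2 B3 : 'End(V)) (I : 'Hom('rV[R[i]]_r, V)) (J : 'Hom(V, 'rV[R[i]]_r)) :
  framed_rep B1 B2 B3 I J ->
  (framed_cyclic B1 B2 B3 I <-> adhm_cyclic B1 B2 I).
Proof.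
case=> _ _ B3I B3B1 B3B2; split=> [framedC [U [U0 Uf B1U B2U IU]] |]; last first.
  by move=> adhmC [U [U0 Uf [B1U B2U _] IU]]; apply: adhmC; exists U.
apply: framedC; have [ImI0 | ImI_neq0] := eqVneq (limg I) 0%VS.
  have dimV_gt0 : (0 < \dim {:V})%N.
    by apply: leq_trans (dimvS (subvf U)); rewrite lt0n dimv_eq0.
  have [a Ea] := exists_leigenvalue B3 dimV_gt0.
  have [Efull | Eproper] := eqVneq (passmx.leigenspace B3 a) fullv.
    by exists U; split=> //; split=> //; apply: full_leigenspace_preserves Efull.
  exists (passmx.leigenspace B3 a); rewrite ImI0 sub0v; split=> //.
  by split; apply: preserves_leigenspace; rewrite ?subrr.
have [W WU [B3W coreW commW]] := exists_invariant_core B3 U.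
have ImIW := coreW _ (preserves_limg_intertwined B3I) IU.
exists W; split; last exact: ImIW.
- by apply: contraNneq ImI_neq0 => W0; rewrite -subv0 -W0.
- by apply: contraNneq Uf => Wf; rewrite eqEsubv subvf -Wf.
- by split=> //; apply: commW.
Qed.
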